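(* For all $X_n,Y_n\in\mathcal{T}^N$, $$D_{T,L^2}(\hat\mu_n(X_n),\hat\mu_n(Y_n))^2\le\frac{b^2}{N}\sum_{k\in I_n}\|X^k-Y^k\|_{L^2}^2,$$ where $\|x\|_{L^2}^2=\int_0^T x_t^2\,dt$.
   Context: $T>0$, $f:\mathbb{R}\to[0,1]$ Lipschitz with constant $1$, $\mathcal{T}=C([0,T],\mathbb{R})$. $(b_i)_{i\in\mathbb{Z}}$ is a positive summable sequence and $b=\sum_{i\in\mathbb{Z}}b_i$. For $n\ge0$, $I_n=\{-n,\dots,n\}$, $N=2n+1$. Shifts $(S^iu)^j=u^{i+j}$ on $\mathcal{T}^{\mathbb{Z}}$. For $u_n\in\mathcal{T}^N$, $u_{n,p}\in\mathcal{T}^{\mathbb{Z}}$ is the periodic extension, $u_{n,p}^j=u_n^{j\bmod I_n}$ (with $j\bmod I_n$ the element of $I_n$ congruent to $j$ mod $N$), and $\hat\mu_n(u_n)=\frac1N\sum_{i\in I_n}\delta_{S^iu_{n,p}}$. $d_{L^2}(u,v)=\sum_{i\in\mathbb{Z}}b_i\|f(u^i)-f(v^i)\|_{L^2}$ on $\mathcal{T}^{\mathbb{Z}}$ and $D_{T,L^2}(\mu,\nu)=\inf_\xi\int d_{L^2}(u,v)\,d\xi(u,v)$, infimum over couplings $\xi$ of $\mu$ and $\nu$. *)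

From HB Require Import structures.
From mathcomp Require Import all_boot all_order all_algebra.
From mathcomp Require Import all_classical all_reals all_analysis.
Set Implicit Arguments. Unset Strict Implicit. Unset Printing Implicit Defensive.
Import Order.TTheory GRing.Theory Num.Theory.
Import numFieldNormedType.Exports.
Local Open Scope classical_set_scope.
Local Open Scope ring_scope.

Section Defs.
Variables (R : realType) (T : R).

(* C([0,T],R), encoded as functions R -> R continuous on [0,T] and
   vanishing outside [0,T] (this is a bijective encoding). *)
Definition is_path (x : R -> R) : Prop :=
  {within `[0, T]%classic, continuous x} /\
  (forall t, ~ (0 <= t <= T) -> x t = 0).

Record Cpath := Path { pval :> R -> R; pvalP : is_path pval }.

Lemma is_path0 : is_path (fun _ => 0).
Proof.
split; last by [].
by apply: continuous_subspaceT => x; exact: cvg_cst.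
Qed.

HB.instance Definition _ := gen_eqMixin Cpath.
HB.instance Definition _ := gen_choiceMixin Cpath.
HB.instance Definition _ := isPointed.Build Cpath (Path is_path0).

(* sigma-algebra on T^Z generated by the coordinate evaluations
   u |-> u^i(t); this is the Borel sigma-algebra of the product
   topology (C([0,T]) is Polish, Z countable). *)
Definition cyl_sets : set (set (int -> Cpath)) :=
  [set A | exists (i : int) (t : R) (B : set R),
      measurable B /\ A = (fun u : int -> Cpath => pval (u i) t) @^-1` B].

Definition Config := g_sigma_algebraType cyl_sets.

Definition intT : set R := `[0, T]%classic.

Definition L2sq (x : R -> R) : \bar R :=
  (\int[lebesgue_measure]_(t in intT) ((x t) ^+ 2)%:E)%E.

Definition L2norm (x : R -> R) : R := Num.sqrt (fine (L2sq x)).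

Definition dL2 (f : R -> R) (b : int -> R) (u v : Config) : \bar R :=
  \esum_(i in [set: int]) (b i * L2norm (fun t => f (u i t) - f (v i t)))%:E.

Definition is_coupling (mu nu : set Config -> \bar R)
    (xi : probability (Config * Config)%type R) : Prop :=
  forall A : set Config, measurable A ->
    xi (A `*` setT) = mu A /\ xi (setT `*` A) = nu A.

Definition DTL2 (f : R -> R) (b : int -> R) (mu nu : set Config -> \bar R)
  : \bar R :=
  ereal_inf [set r | exists xi : probability (Config * Config)%type R,
      is_coupling mu nu xi /\ r = (\int[xi]_z dL2 f b z.1 z.2)%E].

(* I_n = {-n..n} is indexed by 'I_N, N = 2n+1, via k <-> k - n. *)
Definition per_ext (n : nat) (u : 'I_(n.*2.+1) -> Cpath) : Config :=
  fun j : int => u (inord `|((j + n%:Z) %% (n.*2.+1)%:Z)%Z|%N).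

Definition shift (i : int) (u : Config) : Config := fun j => u (i + j).

Definition emp (n : nat) (u : 'I_(n.*2.+1) -> Cpath) : set Config -> \bar R :=
  fun A => (((n.*2.+1)%:R)^-1%:E *
    \sum_(k < n.*2.+1) \d_(shift (k%:Z - n%:Z) (per_ext u)) A)%E.

End Defs.

(* Couple the two empirical measures through the empirical measure of the
   pairs (S^k X_{n,p}, S^k Y_{n,p}), k in I_n.  As f is 1-Lipschitz, the cost
   of the k-th pair is at most sum_i b_i ||X^{(k+i) mod N} - Y^{(k+i) mod N}||,
   and for fixed i the index (k+i) mod N runs over all of I_n as k does, so
   the expected cost is at most (b/N) sum_k ||X^k - Y^k||.  Squaring it and
   using (sum_k a_k)^2 <= N sum_k a_k^2 gives the bound. *)

From Pilot Require Import Defs.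
From HB Require Import structures.
From mathcomp Require Import all_boot all_order all_algebra.
From mathcomp Require Import all_classical all_reals all_analysis.
From mathcomp Require Import measurable_realfun.
Set Implicit Arguments. Unset Strict Implicit. Unset Printing Implicit Defensive.
Import Order.TTheory GRing.Theory Num.Theory.
Import numFieldNormedType.Exports.
Local Open Scope classical_set_scope.
Local Open Scope ring_scope.

Lemma sqr_sumr_le (R : realDomainType) (N : nat) (a : 'I_N -> R) :
  (\sum_i a i) ^+ 2 <= N%:R * \sum_i a i ^+ 2.
Proof.
rewrite -(ler_pMn2r (n := 2)) // expr2 mulr_suml -sumrMnl.
have -> : (N%:R * \sum_i a i ^+ 2) *+ 2 = \sum_i \sum_(j < N) (a i ^+ 2 + a j ^+ 2).
  under [RHS]eq_bigr do rewrite big_split /= sumr_const card_ord.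
  by rewrite big_split /= sumrMnl sumr_const card_ord mulr_natl mulr2n.
apply: ler_sum => i _; rewrite mulr_sumr -sumrMnl; apply: ler_sum => j _.
exact: leif_mean_square_scaled.
Qed.

Lemma sqr_mean_le (R : realFieldType) (N : nat) (a : 'I_N.+1 -> R) :
  (N.+1%:R^-1 * \sum_i a i) ^+ 2 <= N.+1%:R^-1 * \sum_i a i ^+ 2.
Proof.
rewrite exprMn expr2 -mulrA ler_pM2l ?invr_gt0// ler_pdivrMl//.
exact: sqr_sumr_le.
Qed.

Lemma ge0_esumZl_le (R : realType) (I : choiceType) (c : R) (g : I -> \bar R) :
  0 <= c -> (forall i, 0 <= g i)%E ->
  (\esum_(i in [set: I]) (c%:E * g i) <= c%:E * \esum_(i in [set: I]) g i)%E.
Proof.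
move=> c0 g0; apply: ge_ereal_sup => _ [A [finA _] <-] /=.
rewrite -ge0_mule_fsumr//; apply: lee_wpmul2l; first by rewrite lee_fin.
by apply: esum_ge; exists A.
Qed.

Section rotation.
Variable N : nat.

Definition rot_ord (i : int) (k : 'I_N.+1) : 'I_N.+1 :=
  inord `|((k%:Z + i) %% N.+1%:Z)%Z|%N.

Lemma rot_ordE i k : (rot_ord i k)%:Z = ((k%:Z + i) %% N.+1%:Z)%Z.
Proof.
rewrite /rot_ord inordK; first by rewrite gez0_abs ?modz_ge0.
by rewrite -ltz_nat gez0_abs ?modz_ge0 ?ltz_pmod.
Qed.

Lemma rot_ord_inj i : injective (rot_ord i).
Proof.
move=> k1 k2 /(congr1 (fun k : 'I_N.+1 => k%:Z)) /eqP.
rewrite !rot_ordE eqz_modDr !modz_small ?ltz_nat ?ltn_ord //=.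
by move=> /eqP [] /val_inj.
Qed.

Lemma sum_rot_ord (V : nmodType) i (a : 'I_N.+1 -> V) :
  \sum_k a (rot_ord i k) = \sum_k a k.
Proof. by rewrite [RHS](reindex_inj (rot_ord_inj (i := i))). Qed.

End rotation.

Lemma ge0_le_integral_nonmeasurable d (T : measurableType d) (R : realType)
  (mu : {measure set T -> \bar R}) (D : set T) (f g : T -> \bar R) :
  (forall x, D x -> 0 <= f x)%E -> (forall x, D x -> f x <= g x)%E ->
  (\int[mu]_(x in D) f x <= \int[mu]_(x in D) g x)%E.
Proof.
move=> f0 fg.
have g0 x : D x -> (0 <= g x)%E by move=> Dx; exact: le_trans (f0 x Dx) (fg x Dx).
rewrite !ge0_integralE//; apply: ereal_sup_le => _ [h hf <-]; exists h => //= x.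
apply: le_trans (hf x) _; rewrite /patch; case: ifPn => // /[!inE] Dx.
exact: fg.
Qed.

Section L2.
Variables (R : realType) (T : R).

Lemma L2sq_ge0 (x : R -> R) : (0 <= L2sq T x)%E.
Proof. by apply: integral_ge0 => t _; rewrite lee_fin sqr_ge0. Qed.

Lemma L2sq_sub_fin_num (x y : Cpath T) : L2sq T (fun t => x t - y t) \is a fin_num.
Proof.
have cxy : {within `[0, T], continuous (fun t => (x t - y t) ^+ 2)}.
  apply: (@within_continuous_comp _ _ _ _ (fun t => x t - y t) (fun u => u ^+ 2)).
    by move=> u _; exact: exprn_continuous.
  exact: within_continuousB (pvalP x).1 (pvalP y).1.
have /integrable_fin_num := continuous_compact_integrable (@segment_compact _ 0 T) cxy.
by apply; exact: measurable_itv.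
Qed.

Lemma L2sq_subE (x y : Cpath T) :
  L2sq T (fun t => x t - y t) = (L2norm T (fun t => x t - y t) ^+ 2)%:E.
Proof.
by rewrite sqr_sqrtr ?fineK ?L2sq_sub_fin_num// fine_ge0// L2sq_ge0.
Qed.

Lemma L2norm_comp_lipschitz_le (f : R -> R) (x y : Cpath T) :
  (forall u v, `|f u - f v| <= `|u - v|) ->
  L2norm T (fun t => f (x t) - f (y t)) <= L2norm T (fun t => x t - y t).
Proof.
move=> f_lip; apply: ler_wsqrtr.
have sq_le : (L2sq T (fun t => (f (x t) - f (y t))%R) <=
               L2sq T (fun t => (x t - y t)%R))%E.
  apply: ge0_le_integral_nonmeasurable => [t _|t _]; first by rewrite lee_fin sqr_ge0.
  by rewrite lee_fin -[leLHS]real_normK ?num_real// -[leRHS]real_normK ?num_real//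
    lerXn2r ?nnegrE// f_lip.
have fin_xy := L2sq_sub_fin_num x y.
have fin_f : L2sq T (fun t => f (x t) - f (y t)) \is a fin_num.
  by rewrite ge0_fin_numE ?L2sq_ge0// (le_lt_trans sq_le)// ltey_eq fin_xy.
exact: fine_le.
Qed.

End L2.

Section empirical.
Import HBNNSimple.
Context d (T : measurableType d) (R : realType) (N : nat) (z : nat -> T).

Definition empirical : set T -> \bar R :=
  mscale (N.+1%:R^-1 : R)%:nng (msum (fun k => @dirac _ T (z k) R) N.+1).
HB.instance Definition _ := Measure.on empirical.

Local Open Scope ereal_scope.

Lemma empiricalE A : empirical A = (N.+1%:R^-1 : R)%:E * \sum_(k < N.+1) \d_(z k) A.
Proof. by []. Qed.

Lemma empirical_setT : empirical setT = 1.
Proof.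
rewrite empiricalE (eq_bigr (fun=> 1)); last by move=> k _; rewrite diracT.
by rewrite sumEFin big_const card_ord iter_addr addr0 -EFinM mulVf.
Qed.

HB.instance Definition _ := Measure_isProbability.Build _ _ _ empirical empirical_setT.

(* Only an upper bound, since F is not assumed measurable. *)
Lemma integral_empirical_le (F : T -> \bar R) : (forall x, 0 <= F x) ->
  \int[empirical]_x F x <= (N.+1%:R^-1 : R)%:E * \sum_(k < N.+1) F (z k).
Proof.
move=> F0; rewrite ge0_integralTE//; apply: ge_ereal_sup => _ [h hF <-].
have mh : measurable_fun [set: T] (fun x => (h x)%:E).
  by apply/measurable_EFinP; exact: measurable_funP.
rewrite -integralT_nnsfun ge0_integral_mscale//; last by move=> x _; rewrite lee_fin.
rewrite ge0_integral_measure_sum//; last by move=> x _; rewrite lee_fin.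
rewrite lee_pmul2l ?lte_fin ?invr_gt0//; apply: lee_sum => k _.
by rewrite integral_dirac// diracT mul1e; exact: hF.
Qed.

End empirical.

Lemma empirical_setXT d1 d2 (T1 : measurableType d1) (T2 : measurableType d2)
    (R : realType) (N : nat) (z : nat -> T1 * T2) (A : set T1) :
  empirical R N z (A `*` setT) = empirical R N (fst \o z) A.
Proof.
rewrite !empiricalE; congr (_ * _)%E; apply: eq_bigr => k _.
by rewrite !diracE in_setX in_setT andbT.
Qed.

Lemma empirical_setTX d1 d2 (T1 : measurableType d1) (T2 : measurableType d2)
    (R : realType) (N : nat) (z : nat -> T1 * T2) (A : set T2) :
  empirical R N z (setT `*` A) = empirical R N (snd \o z) A.
Proof.
rewrite !empiricalE; congr (_ * _)%E; apply: eq_bigr => k _.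
by rewrite !diracE in_setX in_setT.
Qed.

Section distance.
Variables (R : realType) (T : R) (f : R -> R) (b : int -> R).
Hypothesis b_ge0 : forall i, 0 <= b i.

Lemma dL2_ge0 (u v : Config T) : (0 <= dL2 f b u v)%E.
Proof. by apply: esum_ge0 => i _; rewrite lee_fin mulr_ge0 ?sqrtr_ge0. Qed.

Lemma DTL2_ge0 (mu nu : set (Config T) -> \bar R) : (0 <= DTL2 f b mu nu)%E.
Proof.
by apply/ereal_infP => _ [xi [_ ->]]; apply: integral_ge0 => uv _; exact: dL2_ge0.
Qed.

End distance.

Section periodic_coupling.
Variables (R : realType) (T : R) (n : nat) (X Y : 'I_(n.*2.+1) -> Cpath T).

Definition shifted_pair (k : nat) : Config T * Config T :=
  (Defs.shift (k%:Z - n%:Z) (per_ext X), Defs.shift (k%:Z - n%:Z) (per_ext Y)).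

Lemma shift_per_ext (u : 'I_(n.*2.+1) -> Cpath T) (k : 'I_(n.*2.+1)) (i : int) :
  Defs.shift (k%:Z - n%:Z) (per_ext u) i = u (rot_ord i k).
Proof. by rewrite /Defs.shift /per_ext addrAC subrK. Qed.

Lemma emp_coupling : is_coupling (emp X) (emp Y) (empirical R n.*2 shifted_pair).
Proof.
by move=> A _; split; [exact: empirical_setXT | exact: empirical_setTX].
Qed.

End periodic_coupling.

Section transport_bound.
Variables (R : realType) (T : R) (f : R -> R) (b : int -> R).
Variables (n : nat) (X Y : 'I_(n.*2.+1) -> Cpath T).
Hypothesis f_lip : forall x y, `|f x - f y| <= `|x - y|.
Hypothesis b_ge0 : forall i, 0 <= b i.

Let dist k := L2norm T (fun t => X k t - Y k t).

Lemma dL2_shifted_pair_le (k : 'I_(n.*2.+1)) :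
  (dL2 f b (shifted_pair X Y k).1 (shifted_pair X Y k).2 <=
   \esum_(i in [set: int]) (b i * dist (rot_ord i k))%:E)%E.
Proof.
apply: le_esum => i _; rewrite lee_fin /= !shift_per_ext ler_wpM2l//.
exact: L2norm_comp_lipschitz_le.
Qed.

Lemma sum_dL2_shifted_pair_le :
  (\sum_(k < n.*2.+1) dL2 f b (shifted_pair X Y k).1 (shifted_pair X Y k).2 <=
   (\sum_k dist k)%:E * \esum_(i in [set: int]) (b i)%:E)%E.
Proof.
have dist_ge0 k : 0 <= dist k by exact: sqrtr_ge0.
apply: le_trans; first by apply: lee_sum => k _; exact: dL2_shifted_pair_le.
rewrite -esum_sum; last by move=> i k _ _; rewrite lee_fin mulr_ge0.
have sum_ge0 : 0 <= \sum_k dist k by exact: sumr_ge0.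
apply: le_trans (ge0_esumZl_le sum_ge0 _) => [|i]; last by rewrite lee_fin.
apply: le_esum => i _; rewrite sumEFin -EFinM lee_fin -mulr_sumr sum_rot_ord.
by rewrite mulrC.
Qed.

Lemma DTL2_emp_le :
  (DTL2 f b (emp X) (emp Y) <=
   (n.*2.+1%:R^-1 : R)%:E * ((\sum_k dist k)%:E * \esum_(i in [set: int]) (b i)%:E))%E.
Proof.
pose xi := empirical R n.*2 (shifted_pair X Y).
apply: (@le_trans _ _ (\int[xi]_uv dL2 f b uv.1 uv.2)%E).
  by apply: ereal_inf_lbound; exists xi; split => //; exact: emp_coupling.
apply: le_trans; first by apply: integral_empirical_le => uv; exact: dL2_ge0.
apply: lee_wpmul2l; first by rewrite lee_fin.
exact: sum_dL2_shifted_pair_le.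
Qed.

End transport_bound.

Theorem lemma3p17 (R : realType) (T : R) (f : R -> R) (b : int -> R)
  (n : nat) (X Y : 'I_(n.*2.+1) -> Cpath T) :
  0 < T ->
  (forall x, 0 <= f x <= 1) ->
  (forall x y, `|f x - f y| <= `|x - y|) ->
  (forall i, 0 < b i) ->
  (\esum_(i in [set: int]) (b i)%:E < +oo)%E ->
  let bsum := (\esum_(i in [set: int]) (b i)%:E)%E in
  let D := DTL2 f b (emp X) (emp Y) in
  (D * D <= bsum * bsum * ((n.*2.+1)%:R)^-1%:E *
     \sum_(k < n.*2.+1) L2sq T (fun t => (X k t - Y k t)%R))%E.
Proof.
move=> _ _ f_lip b_gt0 b_fin /=.
set bsum := (\esum_(i in _) _)%E; set D := DTL2 _ _ _ _.
have b_ge0 i : 0 <= b i by exact: ltW.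
have bsum_fin : bsum \is a fin_num.
  by rewrite ge0_fin_numE // esum_ge0 // => i _; rewrite lee_fin.
have D_ge0 : (0 <= D)%E by exact: DTL2_ge0.
have D_le := DTL2_emp_le X Y f_lip b_ge0.
rewrite -/bsum -(fineK bsum_fin) muleA -!EFinM in D_le.
under eq_bigr do rewrite L2sq_subE.
rewrite sumEFin -(fineK bsum_fin) -!EFinM.
apply: le_trans (lee_pmul D_ge0 D_ge0 D_le D_le) _.
rewrite -EFinM lee_fin -expr2 exprMn mulrC -mulrA -expr2 ler_wpM2l ?sqr_ge0//.
exact: sqr_mean_le.
Qed.
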